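(* Let $(X,d)$ be a pointed metric space and let $((x_i,y_i))_{i\in I}$ be a Lipschitz interpolating family in $\widetilde X$ for $\mathrm{Lip}_0(X)$ with Lipschitz interpolation constant $M$. The following are equivalent: (i) $((x_i,y_i))_{i\in I}$ has a Beurling set $(f_i)_{i\in I}$ of functions in $\mathrm{Lip}_0(X)$. (ii) For each real Banach space $E$ there exists a bounded linear operator $R_E:\ell_\infty(I,E)\to\mathrm{Lip}_0(X,E)$ with $\|R_E\|\leq M$ and $T_E\circ R_E=\mathrm{Id}_{\ell_\infty(I,E)}$. Moreover, in that case, for every Banach space $E$ the family $((x_i,y_i))_{i\in I}$ is Lipschitz interpolating for $\mathrm{Lip}_0(X,E)$ and $M_E=M$.
   Context: All spaces are real. $(X,d)$ is a metric space with base point $0$, $\widetilde{X}=\{(x,y)\in X\times X: x\neq y\}$. For a Banach space $E$, $\mathrm{Lip}_0(X,E)$ is the Banach space of Lipschitz $f:X\to E$ with $f(0)=0$, normed by $\|f\|=\sup_{(x,y)\in\widetilde X}\|f(x)-f(y)\|/d(x,y)$; $\mathrm{Lip}_0(X)=\mathrm{Lip}_0(X,\mathbb R)$. $\ell_\infty(I,E)$ is the space of bounded families in $E$ with the sup norm. For a family $((x_i,y_i))_{i\in I}$ in $\widetilde X$, $T_E:\mathrm{Lip}_0(X,E)\to\ell_\infty(I,E)$ is $T_E(f)=\big((f(x_i)-f(y_i))/d(x_i,y_i)\big)_{i\in I}$, and $T=T_{\mathbb R}$. The family is Lipschitz interpolating for $\mathrm{Lip}_0(X,E)$ if $T_E$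 is surjective; then $M_E=\inf\{K>0:\forall v\in\ell_\infty(I,E),\ \|v\|_\infty\le1,\ \exists f\in\mathrm{Lip}_0(X,E),\ \|f\|\le K,\ T_E(f)=v\}$. The Lipschitz interpolation constant for $\mathrm{Lip}_0(X)$ is $M=\inf\{K\geq 1: \forall \alpha\in\ell_\infty(I), \|\alpha\|_\infty\le1,\ \exists f\in\mathrm{Lip}_0(X),\ \|f\|\le K,\ T(f)=\alpha\}$. A Beurling set of functions in $\mathrm{Lip}_0(X)$ for the family is a family $(f_i)_{i\in I}$ of functions $f_i:X\to\mathbb R$ with $f_i(0)=0$, $(f_i(x_j)-f_i(y_j))/d(x_j,y_j)=\delta_{ij}$ for all $i,j\in I$, and $\sup_{(x,y)\in\widetilde X}\sum_{i\in I}|f_i(x)-f_i(y)|/d(x,y)\leq M$. *)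

From HB Require Import structures.
From mathcomp Require Import all_boot all_order all_algebra.
From mathcomp Require Import all_classical all_reals all_analysis.
Set Implicit Arguments. Unset Strict Implicit. Unset Printing Implicit Defensive.
Import Order.TTheory GRing.Theory Num.Theory.
Import numFieldNormedType.Exports.
Local Open Scope classical_set_scope.
Local Open Scope ring_scope.

Section LipInterp.
Context {R : realType} {X : Type} (d : X -> X -> R) (x0 : X).

Definition is_metric : Prop :=
  (forall a b, 0 <= d a b) /\ (forall a b, d a b = 0 <-> a = b) /\
  (forall a b, d a b = d b a) /\ (forall a b c, d a c <= d a b + d b c).

Section Vec.
Context (E : normedModType R).

Definition lip0 (f : X -> E) : Prop :=
  f x0 = 0 /\ exists C : R, forall a b, `|f a - f b| <= C * d a b.

Definition lipnorm (f : X -> E) : R :=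
  sup [set r | exists a b, a <> b /\ r = `|f a - f b| / d a b].

Context {I : Type}.

Definition bdd_family (v : I -> E) : Prop := exists C : R, forall i, `|v i| <= C.

Definition linfnorm (v : I -> E) : R := sup [set `|v i| | i in setT].

Context (x y : I -> X).

Definition TE (f : X -> E) : I -> E :=
  fun i => (d (x i) (y i))^-1 *: (f (x i) - f (y i)).

Definition lip_interpolating : Prop :=
  forall v : I -> E, bdd_family v -> exists f : X -> E, lip0 f /\ TE f = v.

Definition interp_constE : R :=
  inf [set K : R | 0 < K /\
        forall v : I -> E, bdd_family v -> linfnorm v <= 1 ->
          exists f : X -> E, lip0 f /\ lipnorm f <= K /\ TE f = v].

Definition opnorm (RE : (I -> E) -> (X -> E)) : R :=
  sup [set lipnorm (RE v) | v in [set v | bdd_family v /\ linfnorm v <= 1]].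

Definition has_linear_extension (M : R) : Prop :=
  exists RE : (I -> E) -> (X -> E),
    (forall v, bdd_family v -> lip0 (RE v)) /\
    (forall (a : R) v w, bdd_family v -> bdd_family w ->
        RE (fun i => a *: v i + w i) = (fun p => a *: RE v p + RE w p)) /\
    (exists C : R, forall v, bdd_family v -> lipnorm (RE v) <= C * linfnorm v) /\
    opnorm RE <= M /\
    (forall v, bdd_family v -> TE (RE v) = v).

End Vec.

Section Scalar.
Context {I : choiceType} (x y : I -> X).

Definition interp_const : R :=
  inf [set K : R | 1 <= K /\
        forall alpha : I -> R^o, bdd_family alpha -> linfnorm alpha <= 1 ->
          exists f : X -> R^o, lip0 f /\ lipnorm f <= K /\ TE x y f = alpha].

Definition beurling_set (M : R) : Prop :=
  exists f : I -> X -> R,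
    (forall i, f i x0 = 0) /\
    (forall i j, (f i (x j) - f i (y j)) / d (x j) (y j) = (i == j)%:R) /\
    (forall a b, a <> b ->
       (esum setT (fun i => (`|f i a - f i b| / d a b)%:E) <= M%:E)%E).

End Scalar.
End LipInterp.

From HB Require Import structures.
From mathcomp Require Import all_boot all_order all_algebra finmap.
From mathcomp Require Import all_classical all_reals all_analysis.
From mathcomp.analysis.showcase Require Import summability.
From mathcomp Require Import lra.
Set Implicit Arguments. Unset Strict Implicit. Unset Printing Implicit Defensive.
Import Order.TTheory GRing.Theory Num.Theory.
Import numFieldNormedType.Exports.
Local Open Scope classical_set_scope.
Local Open Scope ring_scope.

(* (i) -> (ii): R_E v := sum_i v_i f_i converges unconditionally at each point,
   since sum_i |f_i a - f_i b| <= M d(a,b), and T_E (R_E v) = v because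
   f_i(x_j) - f_i(y_j) = delta_ij d(x_j,y_j).
   (ii) -> (i): put f_i := R(e_i) for E = R.  On a finite set A of indices,
   R applied to the sign vector sum_(i in A) +-e_i turns sum_(i in A) |f_i a - f_i b|
   into the single difference |R w a - R w b| <= |R| |w|_oo d(a,b) <= M d(a,b).
   Finally R_E witnesses M_E <= M.  Conversely, for |e| = 1 the function
   q u := inf_t (|u - t e| + t) is 1-Lipschitz, vanishes at 0 and satisfies
   q (u + s e) = q u + s, so q composed with an E-valued interpolant of (alpha_i e)
   is a scalar interpolant of alpha of no larger norm; q stands in for the
   norming functional of e given by Hahn-Banach. *)

Lemma sum_fsetD_incl {I : choiceType} {V : nmodType} (A B : {fset I}) (F : I -> V) :
  (A `<=` B)%fset -> \sum_(i <- B) F i = \sum_(i <- A) F i + \sum_(i <- (B `\` A)%fset) F i.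
Proof.
move=> AB; rewrite (big_fsetID _ (mem A)); congr (_ + _); apply: eq_fbigl => i.
  by rewrite !inE /= andb_idl // => /(fsubsetP AB).
by rewrite !inE andbC.
Qed.

Lemma sup_le_nonneg {R : realType} (S : set R) (K : R) :
  0 <= K -> ubound S K -> sup S <= K.
Proof.
move=> K0 SK; have [->|/set0P S0] := eqVneq S set0; first by rewrite sup0.
exact: ge_sup.
Qed.

Lemma inf_ge0 {R : realType} (S : set R) : lbound S 0 -> 0 <= inf S.
Proof.
move=> S0; have [->|/set0P nS] := eqVneq S set0; first by rewrite inf0.
exact: lb_le_inf.
Qed.

(* The library declares this instance inside a section, so it is not global. *)
#[local] Existing Instance totally_filter.

Section UnorderedSum.
Context {R : realType} {I : choiceType} {E : completeNormedModType R}.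
Implicit Types (u w : I -> E) (A : {fset I}).

Lemma partial_sumE u A : partial_sum u A = \sum_(i <- A) u i.
Proof. by rewrite big_seq_fsetE. Qed.

Definition abs_summable u := exists B : R, forall A, \sum_(i <- A) `|u i| <= B.

Lemma cvg_sum u : abs_summable u -> partial_sum u @ totally --> sum u.
Proof.
move=> [B uB]; apply/cauchy_cvgP; apply: cauchy_exP => eps eps0.
pose S := [set \sum_(i <- A) `|u i| | A in [set: {fset I}]].
have supS : has_sup S.
  by split; [exists 0, fset0; rewrite ?big_seq_fset0|exists B => _ [A _ <-]].
have [_ [A0 _ <-] A0_close] := sup_adherent eps0 supS.
exists (partial_sum u A0), A0 => // G /= A0G.
rewrite -ball_normE /= !partial_sumE (sum_fsetD_incl _ A0G) opprD addNKr normrN.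
have GS : \sum_(i <- G) `|u i| <= sup S by apply: (ub_le_sup supS.2); exists G.
rewrite (sum_fsetD_incl _ A0G) in GS.
by apply: le_lt_trans (ler_norm_sum _ _ _) _; lra.
Qed.

Lemma norm_sum_le u (B : R) :
  (forall A, \sum_(i <- A) `|u i| <= B) -> `|sum u| <= B.
Proof.
move=> uB.
apply: (@closed_cvg _ _ totally _ (fun A => `|partial_sum u A|) (fun r : R => r <= B)).
- exact: closed_le.
- by apply: nearW => A; rewrite partial_sumE; exact: le_trans (ler_norm_sum _ _ _) (uB A).
- by apply: cvg_norm; apply: cvg_sum; exists B.
Qed.

Lemma sum_linearP (a : R) u w : abs_summable u -> abs_summable w ->
  sum (fun i => a *: u i + w i) = a *: sum u + sum w.
Proof.
move=> su sw; apply: norm_cvg_lim.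
have -> : partial_sum (fun i => a *: u i + w i) =
    fun A => a *: partial_sum u A + partial_sum w A.
  by apply: funext => A; rewrite !partial_sumE big_split /= scaler_sumr.
by apply: cvgD; [apply: cvgZ; [exact: cvg_cst|exact: cvg_sum]|exact: cvg_sum].
Qed.

Lemma sum_fset_support u A : (forall i, i \notin A -> u i = 0) ->
  sum u = \sum_(i <- A) u i.
Proof.
move=> u0; apply: lim_near_cst => //; exists A => // B /= AB.
rewrite partial_sumE (sum_fsetD_incl _ AB) [X in _ + X]big1_fset ?addr0 // => i.
by rewrite inE => /andP[/u0].
Qed.

End UnorderedSum.

Section LipschitzNorm.
Context {R : realType} {X : Type} (d : X -> X -> R) (dm : is_metric d).

Lemma dist_gt0 a b : a <> b -> 0 < d a b.
Proof.
case: dm => d0 [dE _] ab; rewrite lt_neqAle d0 andbT eq_sym.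
by apply/eqP => /dE.
Qed.

Lemma dist_xx a : d a a = 0.
Proof. by case: dm => _ [dE _]; apply/dE. Qed.

Context {E : normedModType R}.
Implicit Type f : X -> E.

Lemma lipnorm_le f K : 0 <= K ->
  (forall a b, `|f a - f b| <= K * d a b) -> lipnorm d f <= K.
Proof.
move=> K0 fK; apply: sup_le_nonneg => // _ [a [b [ab ->]]].
by rewrite ler_pdivrMr ?fK // (dist_gt0 ab).
Qed.

Lemma difquot_le_lipnorm f C a b : (forall a b, `|f a - f b| <= C * d a b) ->
  a <> b -> `|f a - f b| / d a b <= lipnorm d f.
Proof.
move=> fC ab; apply: ub_le_sup; last by exists a, b.
exists C => _ [a' [b' [ab' ->]]].
by rewrite ler_pdivrMr ?fC // (dist_gt0 ab').
Qed.

Lemma lipschitz_lipnorm f C a b : (forall a b, `|f a - f b| <= C * d a b) ->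
  `|f a - f b| <= lipnorm d f * d a b.
Proof.
move=> fC; have [<-|ab] := pselect (a = b).
  by rewrite subrr normr0 dist_xx mulr0.
by rewrite -ler_pdivrMr ?(dist_gt0 ab) //; exact: difquot_le_lipnorm fC ab.
Qed.

Lemma TE_le_lipnorm {I : Type} (x y : I -> X) f C i :
  (forall a b, `|f a - f b| <= C * d a b) -> x i <> y i ->
  `|TE d x y f i| <= lipnorm d f.
Proof.
move=> fC xyi; rewrite /TE normrZ normfV (ger0_norm (ltW (dist_gt0 xyi))) mulrC.
exact: difquot_le_lipnorm fC xyi.
Qed.

End LipschitzNorm.

Section SupNorm.
Context {R : realType} {E : normedModType R} {I : Type}.
Implicit Type v : I -> E.

Lemma linfnorm_ub v i : bdd_family v -> `|v i| <= linfnorm v.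
Proof. by move=> [C vC]; apply: ub_le_sup; [exists C => _ [j _ <-]|exists i]. Qed.

Lemma linfnorm_le v K : 0 <= K -> (forall i, `|v i| <= K) -> linfnorm v <= K.
Proof. by move=> K0 vK; apply: sup_le_nonneg => // _ [i _ <-]. Qed.

Lemma linfnorm_ge0 v : bdd_family v -> 0 <= linfnorm v.
Proof.
move=> bv; rewrite /linfnorm; set S := (X in sup X).
have [->|/set0P [_ [i _ _]]] := eqVneq S set0; first by rewrite sup0.
by apply: le_trans (normr_ge0 (v i)) _; exact: linfnorm_ub.
Qed.

Lemma opnorm_ub {X : Type} (d : X -> X -> R) (RE : (I -> E) -> X -> E) C v :
  (forall v, bdd_family v -> lipnorm d (RE v) <= C * linfnorm v) ->
  bdd_family v -> linfnorm v <= 1 -> lipnorm d (RE v) <= opnorm d RE.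
Proof.
move=> RC bv lv; apply: ub_le_sup; last by exists v.
exists `|C| => _ [w [bw lw] <-]; apply: le_trans (RC w bw) _.
have := linfnorm_ge0 bw; have := ler_norm C; have := normr_ge0 C; nra.
Qed.

End SupNorm.

Section LineCoordinate.
Context {R : realType} {E : normedModType R} (e : E) (e1 : `|e| = 1).

Definition line_coord (u : E) : R := inf [set `|u - t *: e| + t | t in [set: R]].

Lemma line_coord_lbound u : lbound [set `|u - t *: e| + t | t in [set: R]] (- `|u|).
Proof.
move=> _ [t _ <-]; have := ler_normB u (u - t *: e).
rewrite opprB (addrC u) subrK normrZ e1 mulr1.
have := ler_norm (- t); rewrite normrN; lra.
Qed.

Lemma line_coord_le u t : line_coord u <= `|u - t *: e| + t.
Proof. by apply: ge_inf; [exists (- `|u|); exact: line_coord_lbound|exists t]. Qed.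

Lemma le_line_coord u c : (forall t, c <= `|u - t *: e| + t) -> c <= line_coord u.
Proof.
by move=> uc; apply: lb_le_inf => [|_ [t _ <-] //]; exists (`|u - 0 *: e| + 0), 0.
Qed.

Lemma line_coord_shift u s : line_coord (u + s *: e) = line_coord u + s.
Proof.
have le_shift w r : line_coord (w + r *: e) <= line_coord w + r.
  rewrite -lerBlDr; apply: le_line_coord => t.
  have := line_coord_le (w + r *: e) (t + r).
  rewrite scalerDl opprD addrACA subrr addr0; lra.
apply/eqP; rewrite eq_le le_shift /=.
have := le_shift (u + s *: e) (- s); rewrite scaleNr addrK; lra.
Qed.

Lemma line_coord_lipschitz u v : `|line_coord u - line_coord v| <= `|u - v|.
Proof.
have le_dist w z : line_coord w <= line_coord z + `|w - z|.
  rewrite -lerBlDr; apply: le_line_coord => t.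
  have := line_coord_le w t; have := ler_distD z w (t *: e); lra.
by rewrite ler_norml; have := le_dist u v; have := le_dist v u; rewrite distrC; lra.
Qed.

Lemma line_coord0 : line_coord 0 = 0.
Proof.
apply/eqP; rewrite eq_le; apply/andP; split.
  by have := line_coord_le 0 0; rewrite scale0r subrr normr0 addr0.
apply: le_line_coord => t; rewrite sub0r normrN normrZ e1 mulr1.
have := ler_norm (- t); rewrite normrN; lra.
Qed.

End LineCoordinate.

Section BeurlingExtension.
Context {R : realType} {X : Type} (d : X -> X -> R) (dm : is_metric d) (x0 : X)
  {I : choiceType} (x y : I -> X) (M : R) (M0 : 0 <= M)
  (f : I -> X -> R) (f0 : forall i, f i x0 = 0)
  (fxy : forall i j, (f i (x j) - f i (y j)) / d (x j) (y j) = (i == j)%:R)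
  (fsum : forall a b, a <> b ->
     (esum setT (fun i => (`|f i a - f i b| / d a b)%:E) <= M%:E)%E).

Lemma beurling_sum_le a b (A : {fset I}) :
  \sum_(i <- A) `|f i a - f i b| <= M * d a b.
Proof.
have [<-|ab] := pselect (a = b).
  by rewrite (dist_xx dm) mulr0 big1 // => i _; rewrite subrr normr0.
rewrite -ler_pdivrMr ?(dist_gt0 dm ab) // mulr_suml -lee_fin.
apply: le_trans (fsum ab); rewrite -sumEFin fsbig_seq ?fset_uniq //.
by apply: esum_ge; exists [set` A] => //; split => //; exact: finite_fset.
Qed.

Context {E : completeNormedModType R}.
Implicit Type v : I -> E.

Definition beurling_extension v (p : X) : E := sum (fun i => f i p *: v i).

Lemma beurling_terms_sum_le v a b (A : {fset I}) : bdd_family v ->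
  \sum_(i <- A) `|(f i a - f i b) *: v i| <= M * d a b * linfnorm v.
Proof.
move=> bv; apply: (@le_trans _ _ (\sum_(i <- A) `|f i a - f i b| * linfnorm v)).
  by apply: ler_sum => i _; rewrite normrZ ler_wpM2l ?linfnorm_ub.
by rewrite -mulr_suml ler_wpM2r ?linfnorm_ge0 ?beurling_sum_le.
Qed.

Lemma abs_summable_beurling_terms v p : bdd_family v ->
  abs_summable (fun i => f i p *: v i).
Proof.
move=> bv; exists (M * d p x0 * linfnorm v) => A.
rewrite (eq_bigr (fun i => `|(f i p - f i x0) *: v i|)) ?beurling_terms_sum_le //.
by move=> i _; rewrite f0 subr0.
Qed.

Lemma beurling_extensionB v a b : bdd_family v ->
  beurling_extension v a - beurling_extension v b = sum (fun i => (f i a - f i b) *: v i).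
Proof.
move=> bv; rewrite addrC -scaleN1r /beurling_extension -sum_linearP;
  try exact: abs_summable_beurling_terms.
by congr sum; apply: funext => i; rewrite scaleN1r scalerBl addrC.
Qed.

Lemma beurling_extension_lipschitz v a b : bdd_family v ->
  `|beurling_extension v a - beurling_extension v b| <= M * linfnorm v * d a b.
Proof.
move=> bv; rewrite beurling_extensionB // mulrAC.
by apply: norm_sum_le => A; exact: beurling_terms_sum_le.
Qed.

Lemma beurling_extension_lipnorm v : bdd_family v ->
  lipnorm d (beurling_extension v) <= M * linfnorm v.
Proof.
move=> bv; apply: (lipnorm_le dm); first by rewrite mulr_ge0 ?linfnorm_ge0.
by move=> a b; exact: beurling_extension_lipschitz.
Qed.

Lemma beurling_extension_x0 v : beurling_extension v x0 = 0.
Proof.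
rewrite /beurling_extension (sum_fset_support _ (A := fset0)) ?big_seq_fset0 // => i _.
by rewrite f0 scale0r.
Qed.

Lemma beurling_extensionP (a : R) v w : bdd_family v -> bdd_family w ->
  beurling_extension (fun i => a *: v i + w i) =
  (fun p => a *: beurling_extension v p + beurling_extension w p).
Proof.
move=> bv bw; apply: funext => p; rewrite /beurling_extension -sum_linearP;
  try exact: abs_summable_beurling_terms.
by congr sum; apply: funext => i; rewrite scalerDr !scalerA mulrC.
Qed.

Lemma TE_beurling_extension v : bdd_family v -> TE d x y (beurling_extension v) = v.
Proof.
move=> bv; apply: funext => j.
have dj : d (x j) (y j) != 0.
  by apply/eqP => dj0; have /eqP := fxy j j; rewrite dj0 invr0 mulr0 eqxx eq_sym oner_eq0.
have fdelta i : f i (x j) - f i (y j) = (i == j)%:R * d (x j) (y j).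
  by rewrite -(fxy i j) divfK.
rewrite /TE beurling_extensionB // (sum_fset_support _ (A := [fset j]%fset)).
  by rewrite big_seq_fset1 fdelta eqxx mul1r scalerA mulVf ?scale1r.
by move=> i; rewrite inE => ij; rewrite fdelta (negbTE ij) mul0r scale0r.
Qed.

Lemma beurling_has_linear_extension : has_linear_extension d x0 E x y M.
Proof.
exists beurling_extension; split; [|split; [|split; [|split]]].
- move=> v bv; split; first exact: beurling_extension_x0.
  by exists (M * linfnorm v) => a b; exact: beurling_extension_lipschitz.
- exact: beurling_extensionP.
- by exists M => v bv; exact: beurling_extension_lipnorm.
- apply: sup_le_nonneg => // _ [v [bv lv] <-].
  apply: le_trans (beurling_extension_lipnorm bv) _.
  by rewrite -[leRHS]mulr1 ler_wpM2l.
- exact: TE_beurling_extension.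
Qed.

End BeurlingExtension.

Lemma beurling_set_linear_extension {R : realType} {X : Type} (d : X -> X -> R) (x0 : X)
    {I : choiceType} (x y : I -> X) (M : R) (E : completeNormedModType R) :
  is_metric d -> 0 <= M ->
  beurling_set d x0 x y M -> has_linear_extension d x0 E x y M.
Proof. by move=> dm M0 [f [f0 [fxy fsum]]]; exact: beurling_has_linear_extension. Qed.

Section LinearExtensionBeurling.
Context {R : realType} {X : Type} (d : X -> X -> R) (dm : is_metric d) (x0 : X)
  {I : choiceType} (x y : I -> X).

Definition unit_family (i : I) : I -> R^o := fun j => (i == j)%:R.

Definition unit_comb (s : I -> R) (l : seq I) : I -> R^o :=
  fun j => \sum_(i <- l) s i * unit_family i j.

Lemma unit_comb_cons s k l :
  unit_comb s (k :: l) = (fun j => s k *: unit_family k j + unit_comb s l j).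
Proof. by apply: funext => j; rewrite /unit_comb big_cons. Qed.

Lemma unit_comb_fset (s : I -> R) (A : {fset I}) j :
  unit_comb s A j = (j \in A)%:R * s j.
Proof.
rewrite /unit_comb; have [jA|jA] := boolP (j \in A); last first.
  rewrite mul0r big1_fset // => i iA _; rewrite /unit_family.
  by case: eqP => [ij|_]; [move: jA; rewrite -ij iA|rewrite mulr0].
rewrite (big_fsetD1 _ jA) /= /unit_family eqxx mulr1 mul1r big1_fset ?addr0 //.
by move=> i; rewrite !inE => /andP[ij _] _; rewrite (negbTE ij) mulr0.
Qed.

Lemma bdd_unit_comb s l : bdd_family (unit_comb s l).
Proof.
exists (\sum_(i <- l) `|s i|) => j; apply: le_trans (ler_norm_sum _ _ _) _.
apply: ler_sum => i _; rewrite normrM -[leRHS]mulr1 ler_wpM2l //.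
by rewrite /unit_family; case: (i == j); rewrite ?normr1 ?normr0.
Qed.

Lemma bdd_unit_family i : bdd_family (unit_family i).
Proof.
by exists 1 => j; rewrite /unit_family; case: (i == j); rewrite ?normr1 ?normr0.
Qed.

Section UnitCombinations.
Context (RE : (I -> R^o) -> X -> R^o)
  (RE_linear : forall (a : R) v w, bdd_family v -> bdd_family w ->
     RE (fun i => a *: v i + w i) = (fun p => a *: RE v p + RE w p)).

Lemma RE_unit_comb s l :
  RE (unit_comb s l) = (fun p => \sum_(i <- l) s i * RE (unit_family i) p).
Proof.
elim: l => [|k l IH].
  have b0 : bdd_family (unit_comb s [::]) by exact: bdd_unit_comb.
  have := RE_linear (-1) b0 b0.
  rewrite (_ : (fun i => _) = unit_comb s [::]); last first.
    by apply: funext => j; rewrite /unit_comb big_nil scaler0 addr0.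
  by move=> ->; apply: funext => p; rewrite big_nil scaleN1r addNr.
rewrite unit_comb_cons (RE_linear _ (bdd_unit_family k) (bdd_unit_comb s l)) IH.
by apply: funext => p; rewrite big_cons.
Qed.

Context (RE_lip : forall v, bdd_family v -> lip0 d x0 (RE v))
  (RE_bounded : exists C, forall v, bdd_family v -> lipnorm d (RE v) <= C * linfnorm v).

Lemma unit_diff_sum_le_opnorm a b (A : {fset I}) : a <> b ->
  \sum_(i <- A) `|RE (unit_family i) a - RE (unit_family i) b| / d a b <= opnorm d RE.
Proof.
move=> ab; have [C RC] := RE_bounded.
pose sgn i : R := if 0 <= RE (unit_family i) a - RE (unit_family i) b then 1 else -1.
have w_le1 : linfnorm (unit_comb sgn A) <= 1.
  apply: linfnorm_le => // j; rewrite unit_comb_fset /sgn.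
  by case: (j \in A); case: ifP; rewrite ?mul0r ?mul1r ?normrN ?normr1 ?normr0.
have RE_sgn : RE (unit_comb sgn A) a - RE (unit_comb sgn A) b =
    \sum_(i <- A) `|RE (unit_family i) a - RE (unit_family i) b|.
  rewrite RE_unit_comb -sumrB; apply: eq_bigr => i _; rewrite -mulrBr /sgn.
  case: ifP => [/ger0_norm -> | /negbT]; first by rewrite mul1r.
  by rewrite -ltNge => /ltr0_norm ->; rewrite mulN1r.
have [_ [C' wC']] := RE_lip (bdd_unit_comb sgn A).
rewrite -mulr_suml -RE_sgn.
apply: le_trans (opnorm_ub RC (bdd_unit_comb _ _) w_le1).
apply: le_trans (difquot_le_lipnorm dm wC' ab).
by rewrite ler_wpM2r ?ler_norm // invr_ge0 ltW // dist_gt0.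
Qed.

End UnitCombinations.

Lemma linear_extension_beurling M :
  has_linear_extension d x0 R^o x y M -> beurling_set d x0 x y M.
Proof.
case=> RE [RE_lip [RE_lin [RE_bdd [RE_M RE_TE]]]].
exists (fun i => RE (unit_family i)); split; [|split].
- by move=> i; case: (RE_lip _ (bdd_unit_family i)).
- move=> i j; rewrite mulrC.
  by have /(congr1 (fun g => g j)) := RE_TE _ (bdd_unit_family i).
- move=> a b ab; apply: ge_ereal_sup => _ [S [finS _] <-].
  rewrite fsbig_finite //= sumEFin lee_fin; apply: le_trans RE_M.
  exact: unit_diff_sum_le_opnorm.
Qed.

End LinearExtensionBeurling.

Section ScalarInterpolation.
Context {R : realType} {X : Type} (d : X -> X -> R) (dm : is_metric d) (x0 : X)
  {I : Type} (x y : I -> X).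

Definition interpolating_with_bound (E : normedModType R) (K : R) : Prop :=
  forall v : I -> E, bdd_family v -> linfnorm v <= 1 ->
    exists f : X -> E, lip0 d x0 f /\ lipnorm d f <= K /\ TE d x y f = v.

Lemma scalar_interpolating_with_bound (E : normedModType R) (e : E) K :
  `|e| = 1 -> (forall i, x i <> y i) -> 0 <= K ->
  interpolating_with_bound E K -> interpolating_with_bound R^o K.
Proof.
move=> e1 xy K0 EK alpha [C alphaC] alpha_le1.
pose v i := alpha i *: e.
have v_norm i : `|v i| = `|alpha i| by rewrite normrZ e1 mulr1.
have bv : bdd_family v by exists C => i; rewrite v_norm.
have v_le1 : linfnorm v <= 1.
  apply: linfnorm_le => // i; rewrite v_norm; apply: le_trans alpha_le1.
  by apply: linfnorm_ub; exists C.
have [g [[g0 [Cg gC]] [gK gTE]]] := EK v bv v_le1.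
have qg_lip a b : `|line_coord e (g a) - line_coord e (g b)| <= `|g a - g b|.
  exact: line_coord_lipschitz e1 _ _.
exists (fun p => line_coord e (g p) : R^o); split; [split|split].
- by rewrite g0 (line_coord0 e1).
- by exists Cg => a b; apply: le_trans (qg_lip a b) (gC a b).
- apply: (lipnorm_le dm) => // a b; apply: le_trans (qg_lip a b) _.
  by apply: le_trans (lipschitz_lipnorm dm _ _ gC) _; rewrite ler_wpM2r // dm.1.
- apply: funext => j; have dj := dist_gt0 dm (xy j).
  have gxy : g (x j) = g (y j) + (d (x j) (y j) * alpha j) *: e.
    have /(congr1 (fun h => h j)) := gTE; rewrite /TE /v.
    move=> /(congr1 (fun u => d (x j) (y j) *: u)).
    by rewrite scalerA mulfV ?gt_eqF // scale1r scalerA => <-; rewrite addrC subrK.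
  by rewrite /TE gxy (line_coord_shift e1) addrC addKr; apply: mulKf; rewrite gt_eqF.
Qed.

Lemma interpolating_with_bound_ge1 (E : normedModType R) (e : E) K i :
  `|e| = 1 -> x i <> y i -> interpolating_with_bound E K -> 1 <= K.
Proof.
move=> e1 xyi EK; have bdd_e : bdd_family (fun _ : I => e) by exists 1 => _; rewrite e1.
have [|g [[_ [Cg gC]] [gK gTE]]] := EK _ bdd_e.
  by apply: linfnorm_le => // _; rewrite e1.
by apply: le_trans gK; have := TE_le_lipnorm dm gC xyi; rewrite gTE e1.
Qed.

Lemma linear_extension_interpolating (E : normedModType R) M :
  has_linear_extension d x0 E x y M -> interpolating_with_bound E M.
Proof.
move=> [RE [RE_lip [_ [[C RC] [RE_M RE_TE]]]]] v bv v_le1.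
exists (RE v); split; [exact: RE_lip|split; last exact: RE_TE].
exact: le_trans (opnorm_ub RC bv v_le1) RE_M.
Qed.

Lemma linear_extension_lip_interpolating (E : normedModType R) M :
  has_linear_extension d x0 E x y M -> lip_interpolating d x0 E x y.
Proof.
move=> [RE [RE_lip [_ [_ [_ RE_TE]]]]] v bv.
by exists (RE v); split; [exact: RE_lip|exact: RE_TE].
Qed.

End ScalarInterpolation.

Lemma interp_const_ge0 {R : realType} {X : Type} (d : X -> X -> R) (x0 : X)
    {I : choiceType} (x y : I -> X) : 0 <= interp_const d x0 x y.
Proof. by apply: inf_ge0 => K [K1 _]; exact: le_trans K1. Qed.

Theorem proposition5p2 (R : realType) (X : Type) (d : X -> X -> R) (x0 : X)
    (I : choiceType) (x y : I -> X) (M : R) :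
  is_metric d ->
  (forall i, x i <> y i) ->
  lip_interpolating d x0 (R^o) x y ->
  M = interp_const d x0 x y ->
  (beurling_set d x0 x y M <->
     (forall E : completeNormedModType R,
        has_linear_extension d x0 E x y M)) /\
  (beurling_set d x0 x y M ->
     forall E : completeNormedModType R,
       lip_interpolating d x0 E x y /\
       ((exists i : I, True) -> (exists e : E, e != 0) ->
          interp_constE d x0 E x y = M)).
Proof.
move=> dm xy _ M_def.
have M0 : 0 <= M by rewrite M_def interp_const_ge0.
split.
  split=> [B E|ext]; first exact: beurling_set_linear_extension.
  exact: linear_extension_beurling (ext R^o).
move=> B E; have ext := beurling_set_linear_extension E dm M0 B.
split=> [|[i0 _] [e0 e0_neq0]]; first exact: linear_extension_lip_interpolating ext.
pose e := `|e0|^-1 *: e0.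
have e1 : `|e| = 1 by rewrite normrZ normfV normr_id mulVf // normr_eq0.
have M_bound := linear_extension_interpolating ext.
have M_pos : 0 < M.
  exact: lt_le_trans ltr01 (interpolating_with_bound_ge1 dm e1 (xy i0) M_bound).
apply/eqP; rewrite eq_le; apply/andP; split.
  by apply: ge_inf; [exists 0 => K [/ltW]|].
apply: lb_le_inf => [|K [K0 EK]]; first by exists M.
have K1 := interpolating_with_bound_ge1 dm e1 (xy i0) EK.
rewrite M_def; apply: ge_inf; first by exists 1 => ? [].
by split=> //; exact: scalar_interpolating_with_bound e1 xy (ltW K0) EK.
Qed.
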